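(* Let $S_0,S_1\in\mathbb{R}$ and let $\pi_0,\pi_1>0$ with $\pi_0+\pi_1=1$ and $\pi_0\neq\pi_1$. For a real control signal $l$ and $\Delta>0$, consider the binary-input binary-output channel from $H\in\{0,1\}$ (with $\Pr(H=i)=\pi_i$) to $Y\in\{0,1\}$ given by $P_{Y|H}(0\mid i)=e^{-\lambda_i\Delta}$, $P_{Y|H}(1\mid i)=1-e^{-\lambda_i\Delta}$, where $\lambda_i=(S_i+l)^2$, and let $I_l(\Delta)=I(H;Y)$ be its mutual information. Then, in the limit of infinitesimal interval $\Delta\to 0$, the choice of $l$ maximizing the mutual information $I(H;Y)$ is $$l^*=\frac{S_0\pi_0-S_1\pi_1}{\pi_1-\pi_0},$$ in the sense that $\lim_{\Delta\to 0}I_{l^*}(\Delta)/\Delta\ \ge\ \lim_{\Delta\to0} I_l(\Delta)/\Delta$ for every real $l$; and with this choice, $\pi_0\sqrt{\lambda_0}=\pi_1\sqrt{\lambda_1}$.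
   Context: $\lambda_i$ is the rate of the Poisson photon-arrival process at the detector under hypothesis $H=i$ when the received coherent-state amplitude $S_i$ is displaced by the local control amplitude $l$; $Y$ indicates zero or one photon arrival in an interval of length $\Delta$. Mutual information is in nats. *)

From Stdlib Require Import Reals.
From Coquelicot Require Import Coquelicot.
Open Scope R_scope.

Definition plogr (p q : R) : R :=
  if Req_EM_T p 0 then 0 else p * ln (p / q).

Definition rate (S l : R) : R := (S + l) ^ 2.

Definition p_click (S l Delta : R) : R := 1 - exp (- (rate S l * Delta)).

(* Mutual information I(H;Y) (nats) of the binary channel with prior
   (pi0, pi1) and P(Y=1|H=i) = q_i:
   I = sum_{i,y} pi_i P(y|i) ln (P(y|i) / P(y)). *)
Definition binMI (pi0 pi1 q0 q1 : R) : R :=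
  let py1 := pi0 * q0 + pi1 * q1 in
  let py0 := pi0 * (1 - q0) + pi1 * (1 - q1) in
  pi0 * plogr (1 - q0) py0 + pi0 * plogr q0 py1
  + pi1 * plogr (1 - q1) py0 + pi1 * plogr q1 py1.

Definition MI_l (S0 S1 pi0 pi1 l Delta : R) : R :=
  binMI pi0 pi1 (p_click S0 l Delta) (p_click S1 l Delta).

From Stdlib Require Import Reals Lra.
From Coquelicot Require Import Coquelicot.
Open Scope R_scope.

(* For small [Delta], [P(Y = 1 | H = i) ~ lambda_i Delta] while the [Y = 0] terms of [I(H;Y)]
   are [o(Delta)], so [I(H;Y) / Delta] tends to
   [J = sum_i pi_i lambda_i ln (lambda_i / (pi_0 lambda_0 + pi_1 lambda_1))].
   With [x_i = S_i + l] we have [lambda_i = x_i ^ 2]: [J] is homogeneous of degree 2 in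
   [(x_0, x_1)], and [x_0 - x_1 = S_0 - S_1] does not depend on [l]. It therefore suffices to show
   [J <= K (x_0 - x_1) ^ 2] with [K = gain pi_0 pi_1], with equality on
   the ray [(x_0, x_1) = c (pi_1, pi_0)], which is exactly [l = l*].
   For [pi_0 < pi_1] and [u = |x_0 / x_1|] this inequality says [gap u >= 0]. The function [gap]
   vanishes at [u = 1] and [u = pi_1 / pi_0], [gap' = 2 u gap_slope], and [gap_slope'] has the
   sign of the convex quadratic [slope_num], which is nonnegative at both zeros; so [gap]
   alternately decreases and increases between its zeros and stays nonnegative. *)

Lemma le_of_is_derive_nonneg (f f' : R -> R) a b : a <= b ->
  (forall t, a <= t <= b -> is_derive f t (f' t)) ->
  (forall t, a <= t <= b -> 0 <= f' t) -> f a <= f b.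
Proof.
  intros Hab Hd Hpos.
  destruct (MVT_gen f a b f') as [c [Hc Hmvt]].
  - intros x Hx. apply Hd. rewrite Rmin_left, Rmax_right in Hx; lra.
  - intros x Hx. rewrite Rmin_left, Rmax_right in Hx by lra.
    apply derivable_continuous_pt. exists (f' x). apply is_derive_Reals, Hd. lra.
  - rewrite Rmin_left, Rmax_right in Hc by lra.
    assert (0 <= f' c * (b - a)) by (apply Rmult_le_pos; [apply Hpos|]; lra).
    lra.
Qed.

Lemma le_of_is_derive_nonpos (f f' : R -> R) a b : a <= b ->
  (forall t, a <= t <= b -> is_derive f t (f' t)) ->
  (forall t, a <= t <= b -> f' t <= 0) -> f b <= f a.
Proof.
  intros Hab Hd Hneg.
  enough (- f a <= - f b) by lra.
  apply (le_of_is_derive_nonneg (fun x => - f x) (fun x => - f' x)); auto.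
  - intros t Ht. apply (is_derive_opp f). auto.
  - intros t Ht. specialize (Hneg t Ht). lra.
Qed.

Lemma ln_le_sub_1 x : 0 < x -> ln x <= x - 1.
Proof. intros Hx. pose proof (exp_ineq1_le (ln x)). rewrite exp_ln in *; lra. Qed.

Lemma ln_ge_div x : 1 <= x -> 2 * (x - 1) / (x + 1) <= ln x.
Proof.
  intros Hx.
  pose (f t := ln t - 2 * (t - 1) / (t + 1)).
  enough (f 1 <= f x) by (unfold f in *; rewrite ln_1 in *; lra).
  apply (le_of_is_derive_nonneg f (fun t => (t - 1) ^ 2 / (t * (t + 1) ^ 2))); auto.
  - intros t Ht. unfold f. auto_derive; [lra|]. field. lra.
  - intros t Ht. apply Rmult_le_pos; [apply pow2_ge_0|].
    apply Rlt_le, Rinv_0_lt_compat, Rmult_lt_0_compat; [lra|apply pow_lt; lra].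
Qed.

Lemma plogrE p q : plogr p q = p * ln (p / q).
Proof. unfold plogr. destruct (Req_EM_T p 0) as [->|_]; ring. Qed.

Lemma plogr_scale t p q : plogr (t * p) (t * q) = t * plogr p q.
Proof.
  rewrite !plogrE. destruct (Req_dec t 0) as [->|Ht]; [ring|].
  replace (t * p / (t * q)) with (p / q); [ring|].
  unfold Rdiv. rewrite Rinv_mult.
  replace (t * p * (/ t * / q)) with (t * / t * (p * / q)) by ring.
  rewrite Rinv_r by exact Ht. ring.
Qed.

(* The limit of [MI_l / Delta] as [Delta -> 0+], in terms of [x_i = S_i + l], i.e. [lambda_i = x_i ^ 2]. *)
Definition mi_rate (a b x0 x1 : R) : R :=
  a * plogr (x0 ^ 2) (a * x0 ^ 2 + b * x1 ^ 2)
  + b * plogr (x1 ^ 2) (a * x0 ^ 2 + b * x1 ^ 2).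

Lemma mi_rate_scale a b t x0 x1 :
  mi_rate a b (t * x0) (t * x1) = t ^ 2 * mi_rate a b x0 x1.
Proof.
  unfold mi_rate. rewrite !Rpow_mult_distr.
  replace (a * (t ^ 2 * x0 ^ 2) + b * (t ^ 2 * x1 ^ 2))
    with (t ^ 2 * (a * x0 ^ 2 + b * x1 ^ 2)) by ring.
  rewrite !plogr_scale. ring.
Qed.

Lemma mi_rate_abs a b x0 x1 : mi_rate a b (Rabs x0) (Rabs x1) = mi_rate a b x0 x1.
Proof. unfold mi_rate. rewrite !pow2_abs. reflexivity. Qed.

Lemma mi_rate_sym a b x0 x1 : mi_rate a b x0 x1 = mi_rate b a x1 x0.
Proof. unfold mi_rate. rewrite (Rplus_comm (a * x0 ^ 2)). ring. Qed.

Definition gain (a b : R) : R := a * b * ln (b / a) / (b - a).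

Lemma gain_mul_sub a b : a <> b -> gain a b * (b - a) = a * b * ln (b / a).
Proof. intros Hab. unfold gain. field. lra. Qed.

Lemma gain_sym a b : 0 < a -> 0 < b -> a <> b -> gain a b = gain b a.
Proof.
  intros Ha Hb Hab. unfold gain.
  replace (a / b) with (/ (b / a)) by (field; lra).
  rewrite ln_Rinv by (apply Rdiv_lt_0_compat; lra).
  field. lra.
Qed.

Lemma mi_rate_opt a b c : 0 < a -> 0 < b -> a <> b -> a + b = 1 ->
  mi_rate a b (b * c) (a * c) = gain a b * ((b - a) * c) ^ 2.
Proof.
  intros Ha Hb Hab Hsum.
  rewrite (Rmult_comm b c), (Rmult_comm a c), mi_rate_scale.
  unfold mi_rate. rewrite !plogrE.
  replace (a * b ^ 2 + b * a ^ 2) with (a * b * (a + b)) by ring.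
  rewrite Hsum, Rmult_1_r.
  replace (b ^ 2 / (a * b)) with (b / a) by (field; lra).
  replace (a ^ 2 / (a * b)) with (/ (b / a)) by (field; lra).
  rewrite ln_Rinv by (apply Rdiv_lt_0_compat; lra).
  replace (gain a b * ((b - a) * c) ^ 2) with (gain a b * (b - a) * (b - a) * c ^ 2) by ring.
  rewrite gain_mul_sub by exact Hab. ring.
Qed.

Section Gap.
Variables a b : R.
Hypothesis a_pos : 0 < a.
Hypothesis a_lt_b : a < b.
Hypothesis a_add_b : a + b = 1.

Lemma ln_ratio_bounds :
  b - a <= b * ln (b / a) /\ a * ln (b / a) <= b - a /\ 2 * (b - a) <= ln (b / a).
Proof.
  assert (Hba : 0 < b / a) by (apply Rdiv_lt_0_compat; lra).
  assert (Hab : 0 < a / b) by (apply Rdiv_lt_0_compat; lra).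
  pose proof (ln_le_sub_1 _ Hba) as Hup.
  pose proof (ln_le_sub_1 _ Hab) as Hlow.
  replace (a / b) with (/ (b / a)) in Hlow by (field; lra).
  rewrite ln_Rinv in Hlow by exact Hba.
  pose proof (ln_ge_div (b / a) ltac:(apply Rcomplements.Rle_div_r; lra)) as Hmid.
  replace (2 * (b / a - 1) / (b / a + 1)) with (2 * (b - a)) in Hmid
    by (field_simplify; [rewrite (Rplus_comm b a), a_add_b; field|]; lra).
  split; [|split]; [| |exact Hmid].
  - assert (b * (/ (b / a) - 1) = a - b) by (field; lra). nra.
  - assert (a * (b / a - 1) = b - a) by (field; lra). nra.
Qed.

Lemma gain_bounds : a <= gain a b /\ gain a b <= b /\ 2 * a * b <= gain a b.
Proof.
  destruct ln_ratio_bounds as [B1 [B2 B3]].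
  pose proof (gain_mul_sub a b ltac:(lra)) as E.
  assert (Hab : 0 < a * b) by (apply Rmult_lt_0_compat; lra).
  split; [|split]; apply (Rmult_le_reg_r (b - a)); try lra; rewrite E.
  - assert (0 <= a * (b * ln (b / a) - (b - a))) by (apply Rmult_le_pos; lra). nra.
  - assert (0 <= b * ((b - a) - a * ln (b / a))) by (apply Rmult_le_pos; lra). nra.
  - assert (0 <= a * b * (ln (b / a) - 2 * (b - a))) by (apply Rmult_le_pos; lra). nra.
Qed.

Lemma gain_pos : 0 < gain a b.
Proof. pose proof gain_bounds. lra. Qed.

Lemma xlnx_le : a * ln a <= b * ln b.
Proof.
  destruct ln_ratio_bounds as [B1 _].
  assert (Hb : 0 < b) by lra.
  pose proof (ln_le_sub_1 (/ b) ltac:(apply Rinv_0_lt_compat; lra)) as Hinv.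
  rewrite ln_Rinv in Hinv by exact Hb.
  assert (Hblnb : - (b * ln b) <= a) by (assert (b * (/ b - 1) = a) by (field_simplify; lra); nra).
  rewrite ln_div in B1 by lra.
  assert ((b - a) * (- (b * ln b)) <= (b - a) * a) by (apply Rmult_le_compat_l; lra).
  nra.
Qed.

(* Both bounds are equivalent to [a ln a <= b ln b] after multiplying by [b - a]. *)
Lemma neg_xlnx_le_gain : - (a * ln a) <= gain a b /\ - (b * ln b) <= gain a b.
Proof.
  pose proof xlnx_le. pose proof (gain_mul_sub a b ltac:(lra)) as E.
  rewrite ln_div in E by lra.
  split; apply (Rmult_le_reg_r (b - a)); try lra; rewrite E; nra.
Qed.

Definition mix u := a * u ^ 2 + b.

Definition gap u :=
  gain a b * (u - 1) ^ 2 - a * u ^ 2 * (2 * ln u - ln (mix u)) + b * ln (mix u).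

Definition gap_slope u := gain a b * (1 - / u) - a * (2 * ln u - ln (mix u)).

Definition slope_num u := gain a b * a * u ^ 2 - 2 * a * b * u + gain a b * b.

Lemma mix_pos u : 0 < mix u.
Proof. unfold mix. pose proof (pow2_ge_0 u). nra. Qed.

Lemma is_derive_gap u : 0 < u -> is_derive gap u (2 * u * gap_slope u).
Proof.
  intros Hu. pose proof (mix_pos u) as Hm. unfold gap, gap_slope, mix in *.
  auto_derive; [repeat split; lra|].
  replace (a * u ^ 2 + b) with (a * (u * (u * 1)) + b) in * by ring.
  field. lra.
Qed.

Lemma is_derive_gap_slope u : 0 < u -> is_derive gap_slope u (slope_num u / (u ^ 2 * mix u)).
Proof.
  intros Hu. pose proof (mix_pos u) as Hm. unfold gap_slope, slope_num, mix in *.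
  auto_derive; [repeat split; lra|].
  field. lra.
Qed.

Lemma mix_1 : mix 1 = 1.
Proof. unfold mix. lra. Qed.

Lemma mix_ratio : mix (b / a) = b / a.
Proof.
  unfold mix. replace (a * (b / a) ^ 2 + b) with (b * (a + b) / a) by (field; lra).
  rewrite a_add_b. field. lra.
Qed.

Lemma gap_1 : gap 1 = 0.
Proof. unfold gap. rewrite mix_1, ln_1. ring. Qed.

Lemma gap_slope_1 : gap_slope 1 = 0.
Proof. unfold gap_slope. rewrite mix_1, ln_1. field. Qed.

Lemma gap_ratio : gap (b / a) = 0.
Proof.
  unfold gap. rewrite mix_ratio.
  replace (gain a b * (b / a - 1) ^ 2) with (gain a b * (b - a) * (b - a) / a ^ 2) by (field; lra).
  rewrite gain_mul_sub by lra. field. lra.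
Qed.

Lemma gap_slope_ratio : gap_slope (b / a) = 0.
Proof.
  unfold gap_slope. rewrite mix_ratio.
  replace (gain a b * (1 - / (b / a))) with (gain a b * (b - a) / b) by (field; lra).
  rewrite gain_mul_sub by lra. field. lra.
Qed.

Lemma slope_num_1 : 0 <= slope_num 1.
Proof. pose proof gain_bounds. unfold slope_num. nra. Qed.

Lemma slope_num_ratio : 0 <= slope_num (b / a).
Proof.
  pose proof gain_bounds. unfold slope_num.
  replace (gain a b * a * (b / a) ^ 2 - 2 * a * b * (b / a) + gain a b * b)
    with (b / a * (gain a b * (a + b) - 2 * a * b)) by (field; lra).
  rewrite a_add_b. apply Rmult_le_pos; [apply Rlt_le, Rdiv_lt_0_compat|]; lra.
Qed.

(* [b / gain a b] is the vertex of the parabola [slope_num]. *)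
Lemma vertex_bounds : 1 <= b / gain a b <= b / a.
Proof.
  destruct gain_bounds as [B1 [B2 _]]. split.
  - apply Rcomplements.Rle_div_r; lra.
  - unfold Rdiv. apply Rmult_le_compat_l; [lra|]. apply Rinv_le_contravar; lra.
Qed.

Lemma slope_num_antitone s t : s <= t -> t <= b / gain a b -> slope_num t <= slope_num s.
Proof.
  intros Hst Ht. pose proof gain_pos.
  apply Rcomplements.Rle_div_r in Ht; [|lra].
  assert (gain a b * s <= b) by nra.
  assert (slope_num s - slope_num t = (t - s) * (a * ((b - gain a b * s) + (b - gain a b * t))))
    by (unfold slope_num; ring).
  assert (0 <= (t - s) * (a * ((b - gain a b * s) + (b - gain a b * t)))) by
    (apply Rmult_le_pos; [|apply Rmult_le_pos]; lra).
  lra.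
Qed.

Lemma slope_num_monotone s t : b / gain a b <= s -> s <= t -> slope_num s <= slope_num t.
Proof.
  intros Hs Hst. pose proof gain_pos.
  apply Rcomplements.Rle_div_l in Hs; [|lra].
  assert (b <= gain a b * t) by nra.
  assert (slope_num t - slope_num s = (t - s) * (a * ((gain a b * s - b) + (gain a b * t - b))))
    by (unfold slope_num; ring).
  assert (0 <= (t - s) * (a * ((gain a b * s - b) + (gain a b * t - b)))) by
    (apply Rmult_le_pos; [|apply Rmult_le_pos]; lra).
  lra.
Qed.

Lemma slope_num_neg_between s t u :
  s <= t <= u -> slope_num s < 0 -> slope_num u < 0 -> slope_num t < 0.
Proof.
  intros Ht Hs Hu. pose proof gain_pos.
  destruct (Rle_lt_or_eq_dec t u (proj2 Ht)) as [Htu | ->]; [|exact Hu].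
  assert ((u - s) * slope_num t = (u - t) * slope_num s + (t - s) * slope_num u
            + gain a b * a * (u - s) * (t - s) * (t - u)) by (unfold slope_num; ring).
  assert ((u - t) * slope_num s < 0) by nra.
  assert ((t - s) * slope_num u <= 0) by nra.
  assert (0 <= gain a b * a * (u - s) * (t - s)) by
    (apply Rmult_le_pos; [apply Rmult_le_pos; [apply Rmult_le_pos|]|]; lra).
  assert (gain a b * a * (u - s) * (t - s) * (t - u) <= 0) by nra.
  nra.
Qed.

Lemma gap_slope_monotone_on s t : 0 < s -> s <= t ->
  (forall r, s <= r <= t -> 0 <= slope_num r) -> gap_slope s <= gap_slope t.
Proof.
  intros Hs Hst Hnum.
  apply (le_of_is_derive_nonneg gap_slope (fun r => slope_num r / (r ^ 2 * mix r))); auto.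
  - intros r Hr. apply is_derive_gap_slope. lra.
  - intros r Hr. apply Rcomplements.Rdiv_le_0_compat; [auto|].
    apply Rmult_lt_0_compat; [apply pow_lt; lra|apply mix_pos].
Qed.

Lemma gap_slope_antitone_on s t : 0 < s -> s <= t ->
  (forall r, s <= r <= t -> slope_num r <= 0) -> gap_slope t <= gap_slope s.
Proof.
  intros Hs Hst Hnum.
  apply (le_of_is_derive_nonpos gap_slope (fun r => slope_num r / (r ^ 2 * mix r))); auto.
  - intros r Hr. apply is_derive_gap_slope. lra.
  - intros r Hr. apply Rmult_le_0_r; [auto|].
    apply Rlt_le, Rinv_0_lt_compat, Rmult_lt_0_compat; [apply pow_lt; lra|apply mix_pos].
Qed.

Lemma gap_monotone_on s t : 0 < s -> s <= t ->
  (forall r, s <= r <= t -> 0 <= gap_slope r) -> gap s <= gap t.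
Proof.
  intros Hs Hst Hslope.
  apply (le_of_is_derive_nonneg gap (fun r => 2 * r * gap_slope r)); auto.
  - intros r Hr. apply is_derive_gap. lra.
  - intros r Hr. apply Rmult_le_pos; [lra|auto].
Qed.

Lemma gap_antitone_on s t : 0 < s -> s <= t ->
  (forall r, s <= r <= t -> gap_slope r <= 0) -> gap t <= gap s.
Proof.
  intros Hs Hst Hslope.
  apply (le_of_is_derive_nonpos gap (fun r => 2 * r * gap_slope r)); auto.
  - intros r Hr. apply is_derive_gap. lra.
  - intros r Hr. specialize (Hslope r Hr). nra.
Qed.

Lemma gap_slope_nonneg_left u t : 1 <= t <= u -> slope_num u < 0 -> 0 <= gap_slope u ->
  0 <= gap_slope t.
Proof.
  intros Ht Hnum_u Hslope_u.
  destruct (Rle_lt_dec 0 (slope_num t)) as [Hnum_t|Hnum_t].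
  - assert (t <= b / gain a b).
    { destruct (Rle_lt_dec t (b / gain a b)) as [|Hv]; [assumption|].
      pose proof (slope_num_monotone t u ltac:(lra) ltac:(lra)). lra. }
    rewrite <- gap_slope_1. apply gap_slope_monotone_on; try lra.
    intros r Hr. apply Rle_trans with (slope_num t); [exact Hnum_t|].
    apply slope_num_antitone; lra.
  - apply Rle_trans with (gap_slope u); [exact Hslope_u|].
    apply gap_slope_antitone_on; try lra.
    intros r Hr. left. apply (slope_num_neg_between t r u); lra.
Qed.

Lemma gap_slope_nonpos_right u t : 0 < u -> u <= t <= b / a -> slope_num u < 0 -> gap_slope u <= 0 ->
  gap_slope t <= 0.
Proof.
  intros Hu Ht Hnum_u Hslope_u.
  pose proof vertex_bounds.
  destruct (Rle_lt_dec 0 (slope_num t)) as [Hnum_t|Hnum_t].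
  - assert (b / gain a b <= t).
    { destruct (Rle_lt_dec (b / gain a b) t) as [|Hv]; [assumption|].
      pose proof (slope_num_antitone u t ltac:(lra) ltac:(lra)). lra. }
    rewrite <- gap_slope_ratio. apply gap_slope_monotone_on; try lra.
    intros r Hr. apply Rle_trans with (slope_num t); [exact Hnum_t|].
    apply slope_num_monotone; lra.
  - apply Rle_trans with (gap_slope u); [|exact Hslope_u].
    apply gap_slope_antitone_on; try lra.
    intros r Hr. left. apply (slope_num_neg_between u r t); lra.
Qed.

Lemma gap_slope_sign_split u : 1 <= u <= b / a ->
  (forall t, 1 <= t <= u -> 0 <= gap_slope t) \/ (forall t, u <= t <= b / a -> gap_slope t <= 0).
Proof.
  intros Hu. pose proof vertex_bounds.
  destruct (Rle_lt_dec 0 (slope_num u)) as [Hnum|Hnum];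
    [destruct (Rle_lt_dec u (b / gain a b)) as [Hv|Hv]
    |destruct (Rle_lt_dec 0 (gap_slope u)) as [Hslope|Hslope]].
  - left. intros t Ht. rewrite <- gap_slope_1. apply gap_slope_monotone_on; try lra.
    intros r Hr. apply Rle_trans with (slope_num u); [exact Hnum|].
    apply slope_num_antitone; lra.
  - right. intros t Ht. rewrite <- gap_slope_ratio. apply gap_slope_monotone_on; try lra.
    intros r Hr. apply Rle_trans with (slope_num u); [exact Hnum|].
    apply slope_num_monotone; lra.
  - left. intros t Ht. apply (gap_slope_nonneg_left u); auto.
  - right. intros t Ht. apply (gap_slope_nonpos_right u); auto; lra.
Qed.

Lemma gap_nonneg u : 0 <= u -> 0 <= gap u.
Proof.
  intros Hu. pose proof vertex_bounds.
  assert (Hratio : 1 < b / a) by (apply Rcomplements.Rlt_div_r; lra).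
  destruct (Req_dec u 0) as [->|Hu0].
  { unfold gap, mix. replace (a * 0 ^ 2 + b) with b by ring.
    pose proof neg_xlnx_le_gain. nra. }
  destruct (Rle_lt_dec u 1) as [Hle1|Hgt1].
  { rewrite <- gap_1. apply gap_antitone_on; try lra.
    intros t Ht. rewrite <- gap_slope_1. apply gap_slope_monotone_on; try lra.
    intros r Hr. apply Rle_trans with (slope_num 1); [apply slope_num_1|].
    apply slope_num_antitone; lra. }
  destruct (Rle_lt_dec (b / a) u) as [Hge|Hlt].
  { rewrite <- gap_ratio. apply gap_monotone_on; try lra.
    intros t Ht. rewrite <- gap_slope_ratio. apply gap_slope_monotone_on; try lra.
    intros r Hr. apply Rle_trans with (slope_num (b / a)); [apply slope_num_ratio|].
    apply slope_num_monotone; lra. }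
  destruct (gap_slope_sign_split u ltac:(lra)) as [Hleft|Hright].
  - rewrite <- gap_1. apply gap_monotone_on; auto; lra.
  - rewrite <- gap_ratio. apply gap_antitone_on; auto; lra.
Qed.

Lemma mi_rate_unit u : 0 <= u -> mi_rate a b u 1 = gain a b * (u - 1) ^ 2 - gap u.
Proof.
  intros Hu. pose proof (mix_pos u) as Hm.
  unfold mi_rate, gap. rewrite !plogrE.
  replace (a * u ^ 2 + b * 1 ^ 2) with (mix u) by (unfold mix; ring).
  replace (1 ^ 2 / mix u) with (/ mix u) by (field; lra).
  rewrite ln_Rinv by exact Hm.
  destruct (Req_dec u 0) as [->|Hu0]; [ring|].
  rewrite ln_div, ln_pow by (try apply pow_lt; lra).
  simpl (INR 2). ring.
Qed.

Lemma mi_rate_le_of_lt x0 x1 : mi_rate a b x0 x1 <= gain a b * (x0 - x1) ^ 2.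
Proof.
  pose proof gain_pos.
  destruct (Req_dec x1 0) as [->|Hx1].
  - replace (mi_rate a b x0 0) with (x0 ^ 2 * mi_rate a b 1 0)
      by (rewrite <- mi_rate_scale; f_equal; ring).
    assert (Hunit : mi_rate a b 1 0 = - (a * ln a)).
    { unfold mi_rate. rewrite !plogrE.
      replace (a * 1 ^ 2 + b * 0 ^ 2) with a by ring.
      replace (1 ^ 2 / a) with (/ a) by (field; lra).
      rewrite ln_Rinv by lra. ring. }
    rewrite Hunit. pose proof neg_xlnx_le_gain. pose proof (pow2_ge_0 x0).
    replace ((x0 - 0) ^ 2) with (x0 ^ 2) by ring. nra.
  - pose proof (Rabs_pos_lt x1 Hx1) as Habs1.
    set (u := Rabs x0 / Rabs x1).
    assert (Hu : 0 <= u) by (apply Rcomplements.Rdiv_le_0_compat; [apply Rabs_pos|lra]).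
    replace (mi_rate a b x0 x1) with (x1 ^ 2 * mi_rate a b u 1).
    2:{ rewrite <- (mi_rate_abs a b x0 x1), <- (pow2_abs x1), <- mi_rate_scale.
        f_equal; unfold u; field; lra. }
    rewrite mi_rate_unit by exact Hu.
    assert (x1 ^ 2 * (u - 1) ^ 2 = (Rabs x0 - Rabs x1) ^ 2)
      by (rewrite <- (pow2_abs x1); unfold u; field; lra).
    assert ((Rabs x0 - Rabs x1) ^ 2 <= (x0 - x1) ^ 2).
    { assert (x0 * x1 <= Rabs x0 * Rabs x1) by (rewrite <- Rabs_mult; apply Rle_abs).
      pose proof (pow2_abs x0). pose proof (pow2_abs x1). nra. }
    pose proof (gap_nonneg u Hu). pose proof (pow2_ge_0 x1).
    nra.
Qed.

End Gap.

Lemma mi_rate_le a b x0 x1 : 0 < a -> 0 < b -> a <> b -> a + b = 1 ->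
  mi_rate a b x0 x1 <= gain a b * (x0 - x1) ^ 2.
Proof.
  intros Ha Hb Hab Hsum.
  destruct (Rlt_dec a b) as [Hlt|Hge]; [apply mi_rate_le_of_lt; auto|].
  rewrite mi_rate_sym, gain_sym by auto.
  replace ((x0 - x1) ^ 2) with ((x1 - x0) ^ 2) by ring.
  apply mi_rate_le_of_lt; lra.
Qed.

Section Limits.
Context {T : Type} (F : (T -> Prop) -> Prop) {FF : Filter F}.

Lemma filterlim_plus_fun (f g : T -> R) x y :
  filterlim f F (locally x) -> filterlim g F (locally y) ->
  filterlim (fun t => f t + g t) F (locally (x + y)).
Proof. intros Hf Hg. exact (filterlim_comp_2 f g Rplus Hf Hg (filterlim_plus x y)). Qed.

Lemma filterlim_mult_fun (f g : T -> R) x y :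
  filterlim f F (locally x) -> filterlim g F (locally y) ->
  filterlim (fun t => f t * g t) F (locally (x * y)).
Proof. intros Hf Hg. exact (filterlim_comp_2 f g Rmult Hf Hg (filterlim_mult x y)). Qed.

Lemma filterlim_inv_fun (f : T -> R) x : x <> 0 ->
  filterlim f F (locally x) -> filterlim (fun t => / f t) F (locally (/ x)).
Proof.
  intros Hx Hf. eapply filterlim_comp; [exact Hf|].
  apply (filterlim_Rbar_inv (Finite x)). congruence.
Qed.

Lemma filterlim_ln_fun (f : T -> R) x : 0 < x ->
  filterlim f F (locally x) -> filterlim (fun t => ln (f t)) F (locally (ln x)).
Proof.
  intros Hx Hf. eapply filterlim_comp; [exact Hf|].
  apply (ex_derive_continuous ln x). auto_derive. lra.
Qed.

End Limits.

Lemma filterlim_div_id_at_right (f : R -> R) d : is_derive f 0 d -> f 0 = 0 ->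
  filterlim (fun x => f x / x) (at_right 0) (locally d).
Proof.
  intros Hd H0. apply is_derive_Reals in Hd.
  apply filterlim_locally. intros eps.
  destruct (Hd eps (cond_pos eps)) as [delta Hdelta].
  exists delta. intros y Hy Hpos.
  change (Rabs (f y / y - d) < eps).
  assert (Hy' : Rabs y < delta).
  { change (Rabs (y - 0) < delta) in Hy. rewrite Rminus_0_r in Hy. exact Hy. }
  specialize (Hdelta y ltac:(lra) Hy').
  rewrite Rplus_0_l, H0, Rminus_0_r in Hdelta. exact Hdelta.
Qed.

Lemma filterlim_plogr_div_id_at_right (f g : R -> R) df dg :
  is_derive f 0 df -> f 0 = 0 -> is_derive g 0 dg -> g 0 = 0 -> 0 < df -> 0 < dg ->
  filterlim (fun x => plogr (f x) (g x) / x) (at_right 0) (locally (plogr df dg)).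
Proof.
  intros Hf f0 Hg g0 Hdf Hdg.
  pose proof (filterlim_div_id_at_right f df Hf f0) as Lf.
  pose proof (filterlim_div_id_at_right g dg Hg g0) as Lg.
  pose proof (filterlim_mult_fun _ _ _ _ _ Lf (filterlim_inv_fun _ _ dg ltac:(lra) Lg)) as Lratio.
  pose proof (filterlim_mult_fun _ _ _ _ _ Lf
    (filterlim_ln_fun _ _ (df / dg) ltac:(apply Rdiv_lt_0_compat; lra) Lratio)) as L.
  rewrite plogrE.
  eapply filterlim_ext_loc; [|exact L].
  exists (mkposreal 1 Rlt_0_1). intros x _ Hx. simpl in Hx.
  rewrite plogrE.
  replace (f x / x * / (g x / x)) with (f x / g x); [unfold Rdiv; ring|].
  unfold Rdiv. rewrite Rinv_mult, Rinv_inv.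
  replace (f x * / x * (/ g x * x)) with (x * / x * (f x * / g x)) by ring.
  rewrite Rinv_r by lra. ring.
Qed.

Lemma filterlim_click_term lam P dP : 0 <= lam ->
  is_derive P 0 dP -> P 0 = 0 -> (0 < lam -> 0 < dP) ->
  filterlim (fun x => plogr (1 - exp (- (lam * x))) (P x) / x)
    (at_right 0) (locally (plogr lam dP)).
Proof.
  intros Hlam HP P0 HdP.
  destruct (Req_dec lam 0) as [->|Hlam0].
  - rewrite plogrE, Rmult_0_l.
    eapply filterlim_ext; [|apply filterlim_const]. intros x; simpl.
    rewrite Rmult_0_l, Ropp_0, exp_0, Rminus_diag, plogrE. unfold Rdiv. ring.
  - assert (Hpos : 0 < lam) by (destruct Hlam; [assumption|congruence]).
    apply filterlim_plogr_div_id_at_right; auto.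
    + auto_derive; auto. rewrite Rmult_0_r, Ropp_0, exp_0. ring.
    + rewrite Rmult_0_r, Ropp_0, exp_0. ring.
Qed.

(* The first-order terms [- lambda_i Delta] cancel after averaging over [H]. *)
Lemma filterlim_no_click_terms p0 p1 l0 l1 : 0 < p0 -> 0 < p1 -> p0 + p1 = 1 ->
  filterlim (fun x =>
    (p0 * plogr (exp (- (l0 * x))) (p0 * exp (- (l0 * x)) + p1 * exp (- (l1 * x)))
   + p1 * plogr (exp (- (l1 * x))) (p0 * exp (- (l0 * x)) + p1 * exp (- (l1 * x)))) / x)
    (at_right 0) (locally 0).
Proof.
  intros H0 H1 Hsum.
  set (g := fun x =>
    p0 * (exp (- (l0 * x)) * (- (l0 * x) - ln (p0 * exp (- (l0 * x)) + p1 * exp (- (l1 * x)))))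
    + p1 * (exp (- (l1 * x)) * (- (l1 * x) - ln (p0 * exp (- (l0 * x)) + p1 * exp (- (l1 * x)))))).
  assert (Hg : is_derive g 0 0).
  { unfold g. auto_derive; rewrite !Rmult_0_r, !Ropp_0, !exp_0, !Rmult_1_r, Hsum; [lra|].
    rewrite ln_1, Rinv_1. replace p1 with (1 - p0) by lra. ring. }
  assert (Hg0 : g 0 = 0).
  { unfold g. rewrite !Rmult_0_r, !Ropp_0, !exp_0, !Rmult_1_r, Hsum, ln_1. ring. }
  eapply filterlim_ext; [|exact (filterlim_div_id_at_right g 0 Hg Hg0)].
  intros x. f_equal. unfold g.
  pose proof (exp_pos (- (l0 * x))). pose proof (exp_pos (- (l1 * x))).
  assert (0 < p0 * exp (- (l0 * x)) + p1 * exp (- (l1 * x))) by nra.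
  rewrite !plogrE, !ln_div, !ln_exp by lra. ring.
Qed.

Lemma filterlim_MI_l_div S0 S1 p0 p1 l : 0 < p0 -> 0 < p1 -> p0 + p1 = 1 ->
  filterlim (fun x => MI_l S0 S1 p0 p1 l x / x) (at_right 0)
    (locally (mi_rate p0 p1 (S0 + l) (S1 + l))).
Proof.
  intros H0 H1 Hsum.
  set (l0 := rate S0 l). set (l1 := rate S1 l).
  assert (L0 : 0 <= l0) by apply pow2_ge_0.
  assert (L1 : 0 <= l1) by apply pow2_ge_0.
  set (P := fun x => p0 * (1 - exp (- (l0 * x))) + p1 * (1 - exp (- (l1 * x)))).
  assert (HP : is_derive P 0 (p0 * l0 + p1 * l1)).
  { unfold P. auto_derive; auto. rewrite !Rmult_0_r, !Ropp_0, !exp_0. ring. }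
  assert (P0 : P 0 = 0) by (unfold P; rewrite !Rmult_0_r, !Ropp_0, !exp_0; ring).
  assert (M0 : 0 < l0 -> 0 < p0 * l0 + p1 * l1) by nra.
  assert (M1 : 0 < l1 -> 0 < p0 * l0 + p1 * l1) by nra.
  pose proof (filterlim_plus_fun _ _ _ _ _ (filterlim_no_click_terms p0 p1 l0 l1 H0 H1 Hsum)
    (filterlim_plus_fun _ _ _ _ _
      (filterlim_mult_fun _ _ _ _ _ (filterlim_const p0) (filterlim_click_term l0 P _ L0 HP P0 M0))
      (filterlim_mult_fun _ _ _ _ _ (filterlim_const p1) (filterlim_click_term l1 P _ L1 HP P0 M1))))
    as L.
  replace (mi_rate p0 p1 (S0 + l) (S1 + l))
    with (0 + (p0 * plogr l0 (p0 * l0 + p1 * l1) + p1 * plogr l1 (p0 * l0 + p1 * l1)))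
    by (unfold mi_rate, l0, l1, rate; ring).
  eapply filterlim_ext; [|exact L].
  intros x. simpl. unfold MI_l, binMI, p_click, P. fold l0 l1.
  replace (1 - (1 - exp (- (l0 * x)))) with (exp (- (l0 * x))) by ring.
  replace (1 - (1 - exp (- (l1 * x)))) with (exp (- (l1 * x))) by ring.
  unfold Rdiv. ring.
Qed.

Theorem lemma1 (S0 S1 pi0 pi1 : R) :
  0 < pi0 -> 0 < pi1 -> pi0 + pi1 = 1 -> pi0 <> pi1 ->
  let lstar := (S0 * pi0 - S1 * pi1) / (pi1 - pi0) in
  (forall l : R, exists L Lstar : R,
     filterlim (fun Delta => MI_l S0 S1 pi0 pi1 l Delta / Delta)
       (at_right 0) (locally L) /\
     filterlim (fun Delta => MI_l S0 S1 pi0 pi1 lstar Delta / Delta)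
       (at_right 0) (locally Lstar) /\
     L <= Lstar)
  /\ pi0 * sqrt (rate S0 lstar) = pi1 * sqrt (rate S1 lstar).
Proof.
  intros H0 H1 Hsum Hne lstar.
  set (c := (S0 - S1) / (pi1 - pi0)).
  assert (E0 : S0 + lstar = pi1 * c) by (unfold lstar, c; field; lra).
  assert (E1 : S1 + lstar = pi0 * c) by (unfold lstar, c; field; lra).
  split.
  - intros l.
    exists (mi_rate pi0 pi1 (S0 + l) (S1 + l)), (mi_rate pi0 pi1 (S0 + lstar) (S1 + lstar)).
    split; [apply filterlim_MI_l_div; auto|].
    split; [apply filterlim_MI_l_div; auto|].
    rewrite E0, E1, mi_rate_opt by auto.
    replace ((pi1 - pi0) * c) with ((S0 + l) - (S1 + l)) by (unfold c; field; lra).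
    apply mi_rate_le; auto.
  - unfold rate. rewrite E0, E1, !Rpow_mult_distr, !sqrt_mult by apply pow2_ge_0.
    rewrite (sqrt_pow2 pi0), (sqrt_pow2 pi1) by lra.
    ring.
Qed.
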